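(* Let $R$ be the ring of integers of a number field, $\mathfrak a$ a fractional ideal of $R$, $\mathfrak p$ a nonzero prime of $R$ with completion $R_{\mathfrak p}$, uniformizer $\varpi$ and $\mathfrak aR_{\mathfrak p}=\varpi^kR_{\mathfrak p}$. Let $(V_{\mathfrak a})_{\mathfrak p}=\{ax^3+3bx^2y+3cxy^2+dy^3: a\in\varpi^kR_{\mathfrak p},b\in R_{\mathfrak p},c\in\varpi^{-k}R_{\mathfrak p},d\in\varpi^{-2k}R_{\mathfrak p}\}$ with Haar measure $\mu$ normalized to give it volume $1$, and let $\mathcal P_{\mathfrak p}\subset(V_{\mathfrak a})_{\mathfrak p}$ be the set of forms for which $b^2-ac$, $\varpi^k(ad-bc)$, $\varpi^{2k}(c^2-bd)$ do not all lie in $\mathfrak pR_{\mathfrak p}$. Then $\mu(\mathcal P_{\mathfrak p})=1-N(\mathfrak p)^{-2}$.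
   Context: $N(\mathfrak p)=\#R/\mathfrak p$. $\mathcal P_{\mathfrak p}$ is the $\mathfrak p$-adic closure of the set of projective forms in $V_{\mathfrak a}$, where $f=ax^3+3bx^2y+3cxy^2+dy^3\in V_{\mathfrak a}$ is projective if no prime divides all of $(b^2-ac)R,(ad-bc)\mathfrak a,(c^2-bd)\mathfrak a^2$. *)

From HB Require Import structures.
From mathcomp Require Import all_boot all_order all_algebra.
From mathcomp Require Import all_classical all_reals all_analysis.
Set Implicit Arguments. Unset Strict Implicit. Unset Printing Implicit Defensive.
Import Order.TTheory GRing.Theory Num.Theory.
Local Open Scope classical_set_scope.
Local Open Scope ring_scope.

(* A binary cubic form a x^3 + 3 b x^2 y + 3 c x y^2 + d y^3 over K is
   identified with its coefficient quadruple ((a, b), c), d. *)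
Definition form4 (K : fieldType) : Type := (K * K * K * K)%type.
HB.instance Definition _ (K : fieldType) := Choice.on (form4 K).
HB.instance Definition _ (K : fieldType) :=
  isPointed.Build (form4 K) ((0, 0, 0, 0) : K * K * K * K).

Definition fa {K : fieldType} (f : form4 K) : K := f.1.1.1.
Definition fb {K : fieldType} (f : form4 K) : K := f.1.1.2.
Definition fc {K : fieldType} (f : form4 K) : K := f.1.2.
Definition fd {K : fieldType} (f : form4 K) : K := f.2.

Definition fadd {K : fieldType} (f g : form4 K) : form4 K :=
  (fa f + fa g, fb f + fb g, fc f + fc g, fd f + fd g).
Definition fscale {K : fieldType} (t : K) (f : form4 K) : form4 K :=
  (t * fa f, t * fb f, t * fc f, t * fd f).

Definition in_scaled {K : fieldType} (O : {pred K}) (w : K) (k : int) (x : K) : Prop :=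
  exists2 o, o \in O & x = w ^ k * o.

Definition Vloc {K : fieldType} (O : {pred K}) (w : K) (k : int) : set (form4 K) :=
  [set f | [/\ in_scaled O w k (fa f), in_scaled O w 0 (fb f),
              in_scaled O w (- k) (fc f) & in_scaled O w (- (2 * k)) (fd f)]].

Definition in_maxideal {K : fieldType} (O : {pred K}) (w : K) (x : K) : Prop :=
  in_scaled O w 1 x.

Definition Ploc {K : fieldType} (O : {pred K}) (w : K) (k : int) : set (form4 K) :=
  [set f | Vloc O w k f /\
     ~ [/\ in_maxideal O w (fb f ^+ 2 - fa f * fc f),
           in_maxideal O w (w ^ k * (fa f * fd f - fb f * fc f)) &
           in_maxideal O w (w ^ (2 * k) * (fc f ^+ 2 - fb f * fd f))]].

(* generators of the (Borel) sigma-algebra: the cosets x + w^n (V_a)_p *)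
Definition ball_cosets {K : fieldType} (O : {pred K}) (w : K) (k : int)
  : set (set (form4 K)) :=
  [set A | exists (x : form4 K) (n : nat),
     A = [set fadd x (fscale (w ^+ n) y) | y in Vloc O w k]].

Definition local_ring_with_uniformizer {K : fieldType} (O : {pred K}) (w : K) : Prop :=
  [/\ 1 \in O, (forall x y, x \in O -> y \in O -> x - y \in O),
      (forall x y, x \in O -> y \in O -> x * y \in O),
      w \in O /\ w != 0 &
      (forall x, x \in O -> ~ in_maxideal O w x -> x^-1 \in O)].

(* N(p) = q : r enumerates a system of representatives of O / w O *)
Definition residue_card {K : fieldType} (O : {pred K}) (w : K) (q : nat) : Prop :=
  exists r : 'I_q -> K,
    (forall i, r i \in O) /\
    (forall x, x \in O -> exists! i, in_maxideal O w (x - r i)).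

From HB Require Import structures.
From mathcomp Require Import all_boot all_order all_algebra.
From mathcomp Require Import all_classical all_reals all_analysis.
From mathcomp Require Import ring.
Import Order.TTheory GRing.Theory Num.Theory.
Local Open Scope classical_set_scope.
Local Open Scope ring_scope.

(* Rescaling (a, b, c, d) to (a / w^k, b, w^k c, w^2k d) identifies (V_a)_p
   with O^4 and turns the three conditions defining P_p into the vanishing
   mod p of the Hessian coefficients b^2 - ac, ad - bc, c^2 - bd.  These
   depend only on the residues of the coefficients, so (V_a)_p splits into
   the q^4 residue classes w (V_a)_p + x, all of the same measure q^-4 by
   translation invariance.  Over the residue field the Hessian vanishes
   exactly on the q^2 forms that are zero or cubes of a linear form: for
   a <> 0, the pair (a, b) determines c = b^2/a and d = b^3/a^2, and for
   a = 0 one needs b = c = 0.  Hence mu(P_p) = (q^4 - q^2) / q^4. *)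

Lemma volume_ratio {F : fieldType} {m : F} {n : nat} :
  m *+ (n ^ 4) = 1 -> m *+ (n ^ 4 - n ^ 2) = 1 - (n%:R ^+ 2)^-1.
Proof.
move=> mn4; have n0 : n%:R != 0 :> F.
  apply: contra_eq_neq mn4 => n0.
  by rewrite -mulr_natr natrX n0 expr0n mulr0 eq_sym oner_eq0.
have n_gt0 : (0 < n)%N by rewrite lt0n; apply: contra_neq n0 => ->.
rewrite -(mulr_natr m) natrX in mn4.
rewrite -(mulr_natr m) natrB ?leq_pexp2l // !natrX.
have -> : m = (n%:R ^+ 4)^-1.
  by apply: (mulIf (expf_neq0 4 n0)); rewrite mn4 mulVf ?expf_neq0.
by field.
Qed.

Lemma exprz_2mul {R : unitRingType} (x : R) (n : int) : x ^ (2 * n) = (x ^ n) ^+ 2.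
Proof. by rewrite mulrC -exprz_exp. Qed.

Lemma fadd0f {K : fieldType} (f : form4 K) : fadd (0, 0, 0, 0) f = f.
Proof. by case: f => [[[a b] c] d]; rewrite /fadd /fa /fb /fc /fd /= !add0r. Qed.

Lemma fscale1f {K : fieldType} (f : form4 K) : fscale 1 f = f.
Proof. by case: f => [[[a b] c] d]; rewrite /fscale /fa /fb /fc /fd /= !mul1r. Qed.

Section MeasureFibers.
Context {d} {T : measurableType d} {R : realType} (mu : {measure set T -> \bar R}).
Context {I : finType} {V : set T} {rho : T -> I} {m : R}.
Hypothesis measurable_fiber : forall i, measurable [set t | V t /\ rho t = i].
Hypothesis mu_fiber : forall i, mu [set t | V t /\ rho t = i] = m%:E.

Lemma measure_fibers (P : {pred I}) :
  mu [set t | V t /\ rho t \in P] = (m *+ #|P|)%:E.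
Proof.
have -> : [set t | V t /\ rho t \in P] =
    \big[setU/set0]_(i in P) [set t | V t /\ rho t = i].
  rewrite -bigcup_pred; apply/seteqP; split=> t /=.
    by case=> Vt Pt; exists (rho t).
  by case=> i Pi [Vt ->].
rewrite big_enum_val (@measure_bigsetU_ord_cond _ _ _ _ _ xpredT) //.
  rewrite (eq_bigr (fun=> m%:E)) => [|i _]; last exact: mu_fiber.
  by rewrite sumEFin sumr_const card_ord.
move=> i j _ _ [t [[_ ei] [_ ej]]].
by apply: enum_val_inj; rewrite -ei -ej.
Qed.

End MeasureFibers.

Section LocalRing.
Context {K : fieldType} {O : {pred K}} {w : K}.
Hypothesis hO : local_ring_with_uniformizer O w.

Local Notation M := (in_maxideal O w).

Lemma memO1 : 1 \in O. Proof. by case: hO. Qed.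

Lemma memOB {x y} : x \in O -> y \in O -> x - y \in O.
Proof. by case: hO => _ + _ _ _; apply. Qed.

Lemma memOM {x y} : x \in O -> y \in O -> x * y \in O.
Proof. by case: hO => _ _ + _ _; apply. Qed.

Lemma memOw : w \in O. Proof. by case: hO => _ _ _ []. Qed.

Lemma uniformizer_neq0 : w != 0. Proof. by case: hO => _ _ _ []. Qed.

Lemma memOV {x} : x \in O -> ~ M x -> x^-1 \in O.
Proof. by case: hO => _ _ _ _; apply. Qed.

Lemma memO0 : 0 \in O. Proof. by rewrite -(subrr 1) memOB ?memO1. Qed.

Lemma memON {x} : x \in O -> - x \in O.
Proof. by move=> Ox; rewrite -sub0r memOB ?memO0. Qed.

Lemma memOD {x y} : x \in O -> y \in O -> x + y \in O.
Proof. by move=> Ox Oy; rewrite -(opprK y) memOB ?memON. Qed.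

Lemma memOX x n : x \in O -> x ^+ n \in O.
Proof. by move=> Ox; elim: n => [|n IHn]; rewrite ?expr0 ?memO1 // exprS memOM. Qed.

Lemma maxidealE x : M x <-> exists2 o, o \in O & x = w * o.
Proof. by rewrite /in_maxideal /in_scaled expr1z. Qed.

Lemma maxidealW {o} : o \in O -> M (w * o).
Proof. by move=> Oo; apply/maxidealE; exists o. Qed.

Lemma maxideal0 : M 0.
Proof. by rewrite -(mulr0 w); apply: maxidealW memO0. Qed.

Lemma maxidealB {x y} : M x -> M y -> M (x - y).
Proof.
move=> /maxidealE[a Oa ->] /maxidealE[b Ob ->].
by rewrite -mulrBr; apply/maxidealW/memOB.
Qed.

Lemma maxidealN {x} : M x -> M (- x).
Proof. by move=> Mx; rewrite -sub0r; apply: maxidealB maxideal0 Mx. Qed.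

Lemma maxidealD {x y} : M x -> M y -> M (x + y).
Proof. by move=> Mx My; rewrite -(opprK y); apply/maxidealB/maxidealN. Qed.

Lemma maxidealMr {x y} : M x -> y \in O -> M (x * y).
Proof. by move=> /maxidealE[a Oa ->] Oy; rewrite -mulrA; apply/maxidealW/memOM. Qed.

Lemma maxidealMl {x y} : y \in O -> M x -> M (y * x).
Proof. by move=> Oy Mx; rewrite mulrC; apply: maxidealMr. Qed.

Lemma maxideal_neq0 {x} : ~ M x -> x != 0.
Proof. by apply: contra_notN => /eqP ->; apply: maxideal0. Qed.

Lemma maxideal_prime {x y} : x \in O -> M (x * y) -> ~ M x -> M y.
Proof.
move=> Ox Mxy Mx; rewrite -(mulKf (maxideal_neq0 Mx) y).
exact: maxidealMl (memOV Ox Mx) Mxy.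
Qed.

Lemma maxideal_sqr {x} : x \in O -> M (x ^+ 2) -> M x.
Proof.
move=> Ox Mx2; case: (pselect (M x)) => // Mx.
by apply: (maxideal_prime Ox _ Mx); rewrite -expr2.
Qed.

Lemma maxideal_congr {x y} : M (x - y) -> M x = M y.
Proof.
move=> Mxy; apply/propext; split=> [Mx|My].
  by rewrite (_ : y = x - (x - y)); [apply: maxidealB | ring].
by rewrite (_ : x = (x - y) + y); [apply: maxidealD | ring].
Qed.

Lemma maxidealM_congr {x y x' y'} : x' \in O -> y \in O ->
  M (x - x') -> M (y - y') -> M (x * y - x' * y').
Proof.
move=> Ox' Oy Mx My.
rewrite (_ : _ - _ = (x - x') * y + x' * (y - y')); last by ring.
by apply: maxidealD; [apply: maxidealMr | apply: maxidealMl].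
Qed.

Lemma maxidealMB_congr {x y s t x' y' s' t'} :
  x' \in O -> y \in O -> s' \in O -> t \in O ->
  M (x - x') -> M (y - y') -> M (s - s') -> M (t - t') ->
  M ((x * y - s * t) - (x' * y' - s' * t')).
Proof.
move=> Ox' Oy Os' Ot Mx My Ms Mt.
rewrite (_ : _ - _ = (x * y - x' * y') - (s * t - s' * t')); last by ring.
by apply: maxidealB; apply: maxidealM_congr.
Qed.

Definition integral_form (g : form4 K) : Prop :=
  let: (a, b, c, d) := g in [/\ a \in O, b \in O, c \in O & d \in O].

Lemma integral_form_scale t g :
  t \in O -> integral_form g -> integral_form (fscale t g).
Proof. by case: g => [[[a b] c] d] Ot [Oa Ob Oc Od]; split; apply: memOM. Qed.

Definition congr_form (g g' : form4 K) : Prop :=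
  let: (a, b, c, d) := g in let: (a', b', c', d') := g' in
  [/\ M (a - a'), M (b - b'), M (c - c') & M (d - d')].

(* Up to the factor 9, the Hessian covariant of the form is
   (ac - b^2) x^2 + (ad - bc) xy + (bd - c^2) y^2. *)
Definition hessian0 (g : form4 K) : Prop :=
  let: (a, b, c, d) := g in
  [/\ M (b ^+ 2 - a * c), M (a * d - b * c) & M (c ^+ 2 - b * d)].

Lemma hessian0_congr g g' : integral_form g -> integral_form g' ->
  congr_form g g' -> hessian0 g = hessian0 g'.
Proof.
case: g g' => [[[a b] c] d] [[[a' b'] c'] d'] /= [_ Ob Oc Od] [Oa' Ob' Oc' _].
move=> [Ma Mb Mc Md].
rewrite !expr2 (maxideal_congr (maxidealMB_congr Ob' Ob Oa' Oc Mb Mb Ma Mc)).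
rewrite (maxideal_congr (maxidealMB_congr Oa' Od Ob' Oc Ma Md Mb Mc)).
by rewrite (maxideal_congr (maxidealMB_congr Oc' Oc Ob' Od Mc Mc Mb Md)).
Qed.

Section Normalization.
Variable k : int.

Local Notation u := (w ^ k).

Lemma expz_uniformizer_neq0 : u != 0. Proof. exact: expfz_neq0 uniformizer_neq0. Qed.

Definition normalize (f : form4 K) : form4 K :=
  (u^-1 * fa f, fb f, u * fc f, u ^+ 2 * fd f).

Definition denormalize (g : form4 K) : form4 K :=
  (u * fa g, fb g, u^-1 * fc g, u ^- 2 * fd g).

Lemma normalizeK : cancel normalize denormalize.
Proof.
have u0 := expz_uniformizer_neq0.
move=> [[[a b] c] d]; rewrite /normalize /denormalize /fa /fb /fc /fd /=.
by congr (_, _, _, _); field; rewrite ?expf_neq0.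
Qed.

Lemma denormalizeK : cancel denormalize normalize.
Proof.
have u0 := expz_uniformizer_neq0.
move=> [[[a b] c] d]; rewrite /normalize /denormalize /fa /fb /fc /fd /=.
by congr (_, _, _, _); field; rewrite ?expf_neq0.
Qed.

Lemma normalize_add f g : normalize (fadd f g) = fadd (normalize f) (normalize g).
Proof. by rewrite /normalize /fadd /fa /fb /fc /fd /=; congr (_, _, _, _); ring. Qed.

Lemma normalize_scale t f : normalize (fscale t f) = fscale t (normalize f).
Proof. by rewrite /normalize /fscale /fa /fb /fc /fd /=; congr (_, _, _, _); ring. Qed.

Lemma in_scaledE e x : in_scaled O w e x = ((w ^ e)^-1 * x \in O).
Proof.
have we : w ^ e != 0 by apply: expfz_neq0 uniformizer_neq0.
apply/propext; split=> [|Ox]; first by case=> o Oo ->; rewrite mulKf.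
by exists ((w ^ e)^-1 * x); rewrite ?mulVKf.
Qed.

Lemma Vloc_normalize f : Vloc O w k f = integral_form (normalize f).
Proof.
by rewrite /Vloc /= !in_scaledE expr0z invr1 mul1r !invr_expz !opprK exprz_2mul.
Qed.

Lemma Ploc_normalize :
  Ploc O w k = [set f | Vloc O w k f /\ ~ hessian0 (normalize f)].
Proof.
have u0 := expz_uniformizer_neq0.
suff E f : [/\ M (fb f ^+ 2 - fa f * fc f), M (u * (fa f * fd f - fb f * fc f))
    & M (w ^ (2 * k) * (fc f ^+ 2 - fb f * fd f))] = hessian0 (normalize f).
  by apply/seteqP; split=> f /=; rewrite /Ploc /= E.
rewrite /hessian0 /normalize exprz_2mul /=.
by congr [/\ M _, M _ & M _]; field.
Qed.

End Normalization.

Section Residues.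
Context {k : int} {q : nat} {r : 'I_q -> K} (i0 : 'I_q).
Hypothesis memOr : forall i, r i \in O.
Hypothesis residue_system : forall x, x \in O -> exists! i, M (x - r i).

Definition res (x : K) : 'I_q := xget i0 [set i | M (x - r i)].

Lemma resP {x} : x \in O -> M (x - r (res x)).
Proof.
move=> Ox; have [i [Mi _]] := residue_system _ Ox.
exact: (@xgetI _ i0 [set i | M (x - r i)] i Mi).
Qed.

Lemma res_unique {x i} : x \in O -> M (x - r i) -> res x = i.
Proof.
move=> Ox Mi; have [j [_ uniq_j]] := residue_system _ Ox.
by rewrite -(uniq_j _ Mi) -(uniq_j _ (resP Ox)).
Qed.

Lemma res_repD i o : o \in O -> res (r i + w * o) = i.
Proof.
move=> Oo; apply: res_unique; first by rewrite memOD ?memOM ?memOw.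
by rewrite addrC addKr; apply: maxidealW.
Qed.

Lemma res_decomp {x} : x \in O -> exists2 o, o \in O & x = r (res x) + w * o.
Proof.
by move=> /resP /maxidealE[v Ov e]; exists v; rewrite // -e addrC subrK.
Qed.

Lemma maxideal_rep i : M (r i) <-> i = res 0.
Proof.
split=> [Mi|->].
  by apply/esym/res_unique; rewrite ?sub0r; [apply: memO0 | apply: maxidealN].
by have := maxidealN (resP memO0); rewrite sub0r opprK.
Qed.

Local Notation res4 := ('I_q * 'I_q * 'I_q * 'I_q)%type.

Definition rep (i : res4) : form4 K :=
  let: (a, b, c, d) := i in (r a, r b, r c, r d).

Definition resform (g : form4 K) : res4 :=
  let: (a, b, c, d) := g in (res a, res b, res c, res d).

Lemma mem_rep_coset g i :
  (exists2 h, integral_form h & g = fadd (rep i) (fscale w h)) <->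
  integral_form g /\ resform g = i.
Proof.
have memO_coset j o : o \in O -> r j + w * o \in O.
  by move=> Oo; rewrite memOD ?memOM ?memOw.
case: g i => [[[a b] c] d] [[[ia ib] ic] id]; split.
  case=> [[[[oa ob] oc] od]] [Oa Ob Oc Od] [-> -> -> ->].
  by rewrite /= !res_repD //; split; split; apply: memO_coset.
case=> [[Oa Ob Oc Od] [<- <- <- <-]].
have [oa Ooa ea] := res_decomp Oa; have [ob Oob eb] := res_decomp Ob.
have [oc Ooc ec] := res_decomp Oc; have [od Ood ed] := res_decomp Od.
by exists (oa, ob, oc, od); rewrite // /fadd /fscale /fa /fb /fc /fd /= -ea -eb -ec -ed.
Qed.

Lemma hessian0_resform {g} :
  integral_form g -> hessian0 g = hessian0 (rep (resform g)).
Proof.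
case: g => [[[a b] c] d] [Oa Ob Oc Od].
by apply: hessian0_congr => /=; split; rewrite ?memOr //; apply: resP.
Qed.

Local Notation res0 := (res 0).

Lemma hessian0_rep_unit {a b c d} : hessian0 (rep (a, b, c, d)) -> ~ M (r a) ->
  c = res (r b ^+ 2 / r a) /\ d = res (r b ^+ 3 / r a ^+ 2).
Proof.
move=> [Mac Mad Mcd] Ma; have a0 := maxideal_neq0 Ma.
have Oa1 : (r a)^-1 \in O := memOV (memOr a) Ma.
have Oc' : r b ^+ 2 / r a \in O by rewrite memOM ?memOX.
have Mc : M (r b ^+ 2 / r a - r c).
  rewrite (_ : _ - _ = (r b ^+ 2 - r a * r c) * (r a)^-1); last by field.
  exact: maxidealMr.
split; first exact/esym/res_unique.
apply/esym/res_unique; first by rewrite !memOM ?memOX // -exprVn memOX.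
rewrite (_ : _ - _ = r b / r a * (r b ^+ 2 / r a - r c)
                     - (r a)^-1 * (r a * r d - r b * r c)); last by field.
by apply: maxidealB; apply: maxidealMl; rewrite ?memOM.
Qed.

Lemma hessian0_rep_nonunit {a b c d} : hessian0 (rep (a, b, c, d)) -> M (r a) ->
  [/\ a = res0, b = res0 & c = res0].
Proof.
move=> [Mac Mad Mcd] Ma.
have Mb : M (r b).
  apply: maxideal_sqr (memOr b) _; rewrite -(subrK (r a * r c) (r b ^+ 2)).
  by apply: maxidealD Mac (maxidealMr Ma (memOr c)).
have Mc : M (r c).
  apply: maxideal_sqr (memOr c) _; rewrite -(subrK (r b * r d) (r c ^+ 2)).
  by apply: maxidealD Mcd (maxidealMr Mb (memOr d)).
by split; apply/maxideal_rep.
Qed.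

(* (a, b, b^2/a, b^3/a^2) is the cube (a x + b y)^3 / a^2. *)
Lemma hessian0_rep_cube a b : ~ M (r a) ->
  hessian0 (rep (a, b, res (r b ^+ 2 / r a), res (r b ^+ 3 / r a ^+ 2))).
Proof.
move=> Ma; have a0 := maxideal_neq0 Ma.
have Oa1 : (r a)^-1 \in O := memOV (memOr a) Ma.
set s := r b ^+ 2 / r a; set t := r b ^+ 3 / r a ^+ 2.
have Os : s \in O by rewrite memOM ?memOX.
have Ot : t \in O by rewrite !memOM ?memOX // -exprVn memOX.
have Ms := resP Os; have Mt := resP Ot.
split.
- rewrite (_ : _ - _ = r a * (s - r (res s))); last by rewrite /s; field.
  exact: maxidealMl.
- rewrite (_ : _ - _ = r b * (s - r (res s)) - r a * (t - r (res t))).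
    by apply: maxidealB; apply: maxidealMl.
  by rewrite /s /t; field.
- rewrite (_ : _ - _ = r b * (t - r (res t)) - (s - r (res s)) * (r (res s) + s)).
    by apply: maxidealB; [apply: maxidealMl | apply: maxidealMr; rewrite ?memOD].
  by rewrite /s /t; field.
Qed.

Lemma hessian0_rep_y3 d : hessian0 (rep (res0, res0, res0, d)).
Proof.
have M0 : M (r res0) by apply/maxideal_rep.
rewrite /= !expr2 subrr -!mulrBr; split; first exact: maxideal0.
  by apply: maxidealMr; rewrite ?memOB.
by apply: maxidealMr; rewrite ?memOB.
Qed.

Definition hessian_null : {set res4} := [set i | `[< hessian0 (rep i) >]]%SET.

Lemma card_hessian_null : #|hessian_null| = (q * q)%N.
Proof.
pose g (i : res4) := let: (a, b, c, d) := i in (a, if a == res0 then d else b).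
rewrite -(@card_in_imset _ _ g).
  suff -> : (g @: hessian_null = [set: 'I_q * 'I_q])%SET.
    by rewrite cardsT card_prod card_ord.
  apply/setP => -[a x]; rewrite !inE; apply/imsetP.
  have [->|a0] := eqVneq a res0.
    exists (res0, res0, res0, x); rewrite /= ?eqxx //.
    by rewrite inE; apply/asboolP/hessian0_rep_y3.
  have Ma : ~ M (r a) by move/maxideal_rep/eqP; rewrite (negPf a0).
  exists (a, x, res (r x ^+ 2 / r a), res (r x ^+ 3 / r a ^+ 2)).
    by rewrite inE; apply/asboolP/hessian0_rep_cube.
  by rewrite /= (negPf a0).
move=> [[[a b] c] d] [[[a' b'] c'] d']; rewrite !inE => H H' /= [ea]; subst a'.
have [Ma|Ma] := pselect (M (r a)).
  have [ea -> ->] := hessian0_rep_nonunit H Ma.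
  by have [_ -> ->] := hessian0_rep_nonunit H' Ma; rewrite ea eqxx => ->.
have /negPf -> : a != res0 by apply/eqP => /maxideal_rep.
move=> eb; subst b'; have [-> ->] := hessian0_rep_unit H Ma.
by have [-> ->] := hessian0_rep_unit H' Ma.
Qed.

Lemma integral_rep i : integral_form (rep i).
Proof. by case: i => [[[a b] c] d]; split. Qed.

Lemma rep_coset_fiber i :
  [set fadd (denormalize k (rep i)) (fscale (w ^+ 1) y) | y in Vloc O w k] =
  [set f | Vloc O w k f /\ resform (normalize k f) = i].
Proof.
apply/seteqP; split=> [_ [y Vy <-]|f [Vf ef]] /=.
  rewrite Vloc_normalize; apply/mem_rep_coset; exists (normalize k y).
    by rewrite -Vloc_normalize.
  by rewrite normalize_add normalize_scale denormalizeK expr1.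
rewrite Vloc_normalize in Vf; have [h Oh eh] := (mem_rep_coset _ _).2 (conj Vf ef).
exists (denormalize k h); first by rewrite Vloc_normalize denormalizeK.
apply: (can_inj (normalizeK k)).
by rewrite normalize_add normalize_scale !denormalizeK expr1.
Qed.

Lemma Ploc_fibers :
  Ploc O w k = [set f | Vloc O w k f /\ resform (normalize k f) \in ~: hessian_null].
Proof.
rewrite Ploc_normalize; apply/seteqP; split=> f [Vf Hf]; split=> //;
  move: Hf; rewrite Vloc_normalize in Vf; rewrite inE (hessian0_resform Vf) inE.
  by move=> Hf; apply/asboolP.
by move/asboolP.
Qed.

Section Volume.
Local Notation mT := (g_sigma_algebraType (ball_cosets O w k)).
Context {R : realType} {mu : {measure set mT -> \bar R}}.
Hypothesis muV : mu (Vloc O w k) = 1%E.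
Hypothesis mu_translation : forall A : set mT,
  measurable A -> A `<=` Vloc O w k ->
  forall x, Vloc O w k x -> mu [set fadd x y | y in A] = mu A.

Lemma measurable_ball_coset x n :
  measurable ([set fadd x (fscale (w ^+ n) y) | y in Vloc O w k] : set mT).
Proof. by apply: sub_sigma_algebra; exists x, n. Qed.

Let W := [set fscale (w ^+ 1) y | y in Vloc O w k].

Lemma measurable_W : measurable (W : set mT).
Proof.
rewrite (_ : W = [set fadd (0, 0, 0, 0) (fscale (w ^+ 1) y) | y in Vloc O w k]).
  exact: measurable_ball_coset.
by apply: eq_imagel => y _; rewrite fadd0f.
Qed.

Lemma W_sub_V : W `<=` Vloc O w k.
Proof.
move=> _ [y Vy <-]; rewrite Vloc_normalize normalize_scale expr1.
by apply: integral_form_scale memOw _; rewrite -Vloc_normalize.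
Qed.

Lemma measurable_V : measurable (Vloc O w k : set mT).
Proof.
rewrite -(@eq_image_id _ (fun y => fadd (0, 0, 0, 0) (fscale (w ^+ 0) y)) (Vloc O w k)).
  exact: measurable_ball_coset.
by move=> y _; rewrite expr0 fscale1f fadd0f.
Qed.

Lemma measure_fiber i :
  mu [set f | Vloc O w k f /\ resform (normalize k f) = i] = mu W.
Proof.
have V_rep : Vloc O w k (denormalize k (rep i)).
  by rewrite Vloc_normalize denormalizeK; apply: integral_rep.
by rewrite -rep_coset_fiber -(mu_translation _ measurable_W W_sub_V _ V_rep) image_comp.
Qed.

Lemma measure_W_finite : mu W = (fine (mu W))%:E.
Proof.
rewrite fineK // ge0_fin_numE ?measure_ge0 //; apply: le_lt_trans (ltry 1).
rewrite -muV; apply: le_measure; rewrite ?inE.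
- exact: measurable_W.
- exact: measurable_V.
- exact: W_sub_V.
Qed.

Lemma measure_Ploc : mu (Ploc O w k) = (1 - (q%:R ^+ 2)^-1)%:E.
Proof.
have card4 : #|[set: res4]%SET| = (q ^ 4)%N.
  by rewrite cardsT !card_prod card_ord !expnS expn0 muln1 !mulnA.
have card_good : #|~: hessian_null| = (q ^ 4 - q ^ 2)%N.
  have := cardsC hessian_null; rewrite card_hessian_null -cardsT card4 => <-.
  by rewrite addKn.
have measurable_fiber i :
    measurable ([set f | Vloc O w k f /\ resform (normalize k f) = i] : set mT).
  by rewrite -rep_coset_fiber; apply: measurable_ball_coset.
have fibers := measure_fibers mu measurable_fiber
  (fun i => etrans (measure_fiber i) measure_W_finite).
have := fibers [set: res4]%SET; rewrite card4 (_ : [set f | _ /\ _] = Vloc O w k).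
  by rewrite muV Ploc_fibers fibers card_good => -[/esym/volume_ratio ->].
by apply/seteqP; split=> [f []|f Vf] //; rewrite in_setT.
Qed.

End Volume.
End Residues.
End LocalRing.

Theorem mainTheorem9 (R : realType) (K : fieldType) (O : {pred K}) (w : K)
  (k : int) (q : nat)
  (hO : local_ring_with_uniformizer O w)
  (hq : residue_card O w q)
  (mu : {measure set (g_sigma_algebraType (ball_cosets O w k)) -> \bar R})
  (hmuV : mu (Vloc O w k) = 1%E)
  (hinv : forall (A : set (g_sigma_algebraType (ball_cosets O w k))),
     measurable A -> A `<=` Vloc O w k ->
     forall x, Vloc O w k x -> mu [set fadd x y | y in A] = mu A) :
  mu (Ploc O w k) = (1 - (q%:R ^+ 2)^-1)%:E.
Proof.
have [r [memOr residue_system]] := hq.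
have [i0 _] := residue_system 1 (memO1 hO).
exact: (measure_Ploc hO i0 memOr residue_system hmuV hinv).
Qed.
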